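(* Let $r\ge 4$ and let $w:E(K_r)\to\mathbb{R}_{>0}$ be a positive edge-weighting of the complete graph $K_r$ on vertex set $U$ which is vertex-induced, i.e. there is $a:U\to\mathbb{R}_{\ge0}$ with $w(uv)=\frac{a(u)+a(v)}{2}$ for all edges $uv$. For each edge $e$ let $C_w(e)$ be the maximum of $w(C)=\sum_{f\in E(C)}w(f)$ over all cycles $C$ of $K_r$ containing $e$. Then $$\sum_{e\in E(K_r)}\frac{w(e)}{C_w(e)}=\frac{r-1}{2}.$$ *)

From HB Require Import structures.
From mathcomp Require Import all_boot all_order all_algebra.
Set Implicit Arguments. Unset Strict Implicit. Unset Printing Implicit Defensive.
Import Order.TTheory GRing.Theory Num.Theory.
Local Open Scope ring_scope.

Section Defs.
Variables (R : realFieldType) (U : finType).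

Definition vweight (a : U -> R) (e : {set U}) : R := (\sum_(x in e) a x) / 2.

(* a cycle of length k is a k-tuple of pairwise distinct vertices, k >= 3;
   its i-th edge joins t_i and t_{i+1 mod k} *)
Definition cyc_edge k (t : k.-tuple U) (i : 'I_k) : {set U} :=
  [set tnth t i; tnth t (ordS i)].

Definition is_cycle k (t : k.-tuple U) : bool := (3 <= k)%N && uniq t.

Definition cycle_contains k (t : k.-tuple U) (e : {set U}) : bool :=
  [exists i : 'I_k, cyc_edge t i == e].

Definition cycle_weight (a : U -> R) k (t : k.-tuple U) : R :=
  \sum_(i < k) vweight a (cyc_edge t i).

(* C_w(e): maximum weight of a cycle of K_U containing e
   (cycles have at most #|U| vertices) *)
Definition Cw (a : U -> R) (e : {set U}) : R :=
  \big[Num.max/0]_(k < #|U|.+1)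
     \big[Num.max/0]_(t : k.-tuple U | is_cycle t && cycle_contains t e)
        cycle_weight a t.
End Defs.

(** The weight of a cycle is the total vertex weight of the cycle, since each
    vertex contributes half of [a u] to each of its two cycle edges.  As the
    vertex weights are nonnegative, the heaviest cycle through any edge is
    therefore a Hamiltonian one, so [C_w(e) = S := sum_u a u] for every edge.
    Summing, each vertex lies on [r - 1] edges, so [sum_e w(e) = (r - 1) S / 2],
    and [S > 0] because the edge weights are positive. *)

From HB Require Import structures.
From mathcomp Require Import all_boot all_order all_algebra.
From mathcomp Require Import ring.
Set Implicit Arguments. Unset Strict Implicit. Unset Printing Implicit Defensive.
Import Order.TTheory GRing.Theory Num.Theory.
Local Open Scope ring_scope.

Lemma ordS_neq k (i : 'I_k) : (1 < k)%N -> ordS i != i.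
Proof.
move=> k_gt1; apply/eqP => /(congr1 val) /=.
have [lt_ik | ge_ik] := ltnP i.+1 k.
  by rewrite modn_small // => /esym /n_Sn.
have -> : i.+1 = k by apply/eqP; rewrite eqn_leq ge_ik ltn_ord.
by rewrite modnn => i0; move: ge_ik; rewrite -i0 leqNgt k_gt1.
Qed.

Lemma card_edges_at (U : finType) (x : U) :
  #|[set e : {set U} | (#|e| == 2) && (x \in e)]| = #|U|.-1.
Proof.
have -> : [set e : {set U} | (#|e| == 2) && (x \in e)] =
          (fun y => [set x; y]) @: [set~ x].
  apply/setP => e; rewrite inE; apply/andP/imsetP.
    case=> /cards2P[y1 [y2 [y12 ->]]]; rewrite !inE => /orP[] /eqP xy; subst.
      by exists y2; rewrite // !inE eq_sym.
    by exists y1; rewrite 1?setUC // !inE.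
  by case=> y; rewrite !inE => yx ->; rewrite cards2 (eq_sym x) yx set21.
rewrite card_in_imset ?cardsC1 // => y1 y2; rewrite !inE => y1x _ e12.
have : y1 \in [set x; y2] by rewrite -e12 set22.
by rewrite !inE (negbTE y1x) => /eqP.
Qed.

Lemma hamiltonian_cycle_through (U : finType) (u v : U) :
  (3 <= #|U|)%N -> u != v ->
  exists t : #|U|.-tuple U,
    [/\ is_cycle t, cycle_contains t [set u; v] & forall x, x \in t].
Proof.
move=> U_ge3 uv; pose s := u :: v :: enum (~: [set u; v]).
have size_s : size s == #|U|.
  by rewrite /= -cardE -(cardsC [set u; v]) cards2 uv.
have U_gt0 : (0 < #|U|)%N by apply: leq_trans U_ge3.
exists (Tuple size_s); split.
- rewrite /is_cycle U_ge3 /= !inE !mem_enum !inE !eqxx orbT (negbTE uv).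
  exact: enum_uniq.
- apply/existsP; exists (Ordinal U_gt0).
  by rewrite /cyc_edge !(tnth_nth u) /= modn_small // (leq_trans _ U_ge3).
- by move=> x; rewrite !inE mem_enum !inE; case: (x == u); case: (x == v).
Qed.

Section VertexInducedWeights.
Variables (R : realFieldType) (U : finType) (a : U -> R).

Lemma vweight_set2 (u v : U) : u != v -> vweight a [set u; v] = (a u + a v) / 2.
Proof. by move=> uv; rewrite /vweight big_setU1 ?big_set1 // in_set1. Qed.

Lemma cycle_weightE k (t : k.-tuple U) :
  (1 < k)%N -> uniq t -> cycle_weight a t = \sum_(x in t) a x.
Proof.
move=> k_gt1 t_uniq.
have next_neq i : tnth t i != tnth t (ordS i).
  by apply: contra_neq (ordS_neq i k_gt1) => /(tuple_uniqP t t_uniq)/esym.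
rewrite /cycle_weight.
under eq_bigr => i _ do rewrite /cyc_edge vweight_set2 //.
have rotate : \sum_(i < k) a (tnth t (ordS i)) = \sum_(i < k) a (tnth t i).
  by rewrite [RHS](reindex_inj (@ordS_inj k)).
by rewrite -big_distrl big_split /= rotate -big_uniq // big_tuple; field.
Qed.

Lemma sum_vweight_edges :
  \sum_(e : {set U} | #|e| == 2) vweight a e = (\sum_x a x) *+ #|U|.-1 / 2.
Proof.
rewrite /vweight -big_distrl /= (exchange_big_dep predT) //=.
congr (_ / 2); rewrite -sumrMnl; apply: eq_bigr => x _.
rewrite -(card_edges_at x) -sumr_const.
by apply: eq_bigl => e; rewrite inE.
Qed.

Hypothesis a_ge0 : forall u, 0 <= a u.

Lemma Cw_le_sum (e : {set U}) : Cw a e <= \sum_x a x.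
Proof.
apply: bigmax_le => [|k _]; first exact: sumr_ge0.
apply: bigmax_le => [|t /andP[/andP[k_ge3 t_uniq] _]]; first exact: sumr_ge0.
rewrite cycle_weightE ?(ltn_trans _ k_ge3) //.
by rewrite [leRHS](bigID (mem t)) lerDl sumr_ge0.
Qed.

Lemma Cw_edge (e : {set U}) :
  (3 <= #|U|)%N -> #|e| == 2 -> Cw a e = \sum_x a x.
Proof.
move=> U_ge3 /cards2P[u [v [uv ->]]]; apply/le_anti; rewrite Cw_le_sum /=.
have [t [t_cycle t_uv t_full]] := hamiltonian_cycle_through U_ge3 uv.
apply: le_trans (le_bigmax _ _ ord_max).
apply: le_trans (le_bigmax_cond (j := t) _ _ _); last by rewrite t_cycle t_uv.
case/andP: t_cycle => U_ge3' t_uniq.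
by rewrite cycle_weightE ?(ltn_trans _ U_ge3') // [leRHS](eq_bigl _ _ t_full).
Qed.

End VertexInducedWeights.

Theorem proposition3p2 (R : realFieldType) (U : finType) (a : U -> R)
  (hr : (4 <= #|U|)%N)
  (ha : forall u, 0 <= a u)
  (hw : forall u v, u != v -> 0 < vweight a [set u; v]) :
  \sum_(e : {set U} | #|e| == 2%N) vweight a e / Cw a e
    = (#|U|%:R - 1) / 2.
Proof.
set S := \sum_x a x.
have U_ge3 : (3 <= #|U|)%N by apply: ltnW.
have S_neq0 : S != 0.
  have [u [v [_ _ uv]]] := card_gt1P (ltnW U_ge3).
  apply: contraTneq (hw u v uv) => /(psumr_eq0P (fun x _ => ha x)) a0.
  by rewrite vweight_set2 // !a0 // addr0 mul0r ltxx.
rewrite (eq_bigr (fun e => vweight a e / S)); last first.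
  by move=> e /(Cw_edge ha U_ge3) ->.
rewrite -big_distrl /= sum_vweight_edges -[S *+ _]mulr_natr -subn1.
by rewrite natrB ?(leq_trans _ hr) //; field.
Qed.
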